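(* Let $A$ be a Jacobson ring and $a\in A$. Let $B$ be an $A$-algebra such that the localization $B_a=B[1/a]$ is integral over $A_a=A[1/a]$. Then $a\cdot\mathrm{Jac}_B J\subseteq \mathrm{Nil}_B J$ for every ideal $J$ of $B$.
   Context: All rings are commutative with identity. The setting is constructive mathematics: no law of excluded middle and no Zorn's lemma. For a ring $A$ and a subset $U\subseteq A$, $\langle U\rangle_A$ denotes the ideal generated by $U$. Define $\mathrm{Nil}_A U:=\{a\in A:\exists n\ge 0,\ a^n\in\langle U\rangle_A\}$ and $\mathrm{Jac}_A U:=\{a\in A:\forall b\in A,\ 1\in\langle U\cup\{1-ab\}\rangle_A\}$. A ring $A$ is called Jacobson if every ideal $I$ of $A$ satisfies $\mathrm{Jac}_A I\subseteq \mathrm{Nil}_A I$. *)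

From mathcomp Require Import all_boot all_algebra.
Set Implicit Arguments. Unset Strict Implicit. Unset Printing Implicit Defensive.
Import GRing.Theory.
Local Open Scope ring_scope.

Section Ideals.
Variable R : comPzRingType.

Definition is_ideal (I : R -> Prop) : Prop :=
  [/\ I 0, (forall x y, I x -> I y -> I (x + y)) & (forall r x, I x -> I (r * x))].

Definition gen_ideal (U : R -> Prop) : R -> Prop :=
  fun x => exists (n : nat) (r u : 'I_n -> R),
      (forall i, U (u i)) /\ x = \sum_(i < n) r i * u i.

Definition Nilrad (U : R -> Prop) : R -> Prop :=
  fun x => exists n : nat, gen_ideal U (x ^+ n).

Definition Jacrad (U : R -> Prop) : R -> Prop :=
  fun x => forall b : R, gen_ideal (fun y => U y \/ y = 1 - x * b) 1.

Definition Jacobson_ring : Prop :=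
  forall I : R -> Prop, is_ideal I -> forall x, Jacrad I x -> Nilrad I x.

End Ideals.

(* The localization B[1/s] written out explicitly: an element b/s^n is
   represented by the pair (b, n); equality in B[1/s] is [loc_eq s]. *)
Section Localization.
Variable B : comPzRingType.
Variable s : B.

Definition loc_eq (x y : B * nat) : Prop :=
  exists k : nat, s ^+ k * (s ^+ y.2 * x.1 - s ^+ x.2 * y.1) = 0.
Definition loc_zero : B * nat := (0, 0%N).
Definition loc_one : B * nat := (1, 0%N).
Definition loc_add (x y : B * nat) : B * nat :=
  (s ^+ y.2 * x.1 + s ^+ x.2 * y.1, (x.2 + y.2)%N).
Definition loc_mul (x y : B * nat) : B * nat := (x.1 * y.1, (x.2 + y.2)%N).
Definition loc_exp (x : B * nat) (n : nat) : B * nat := iter n (loc_mul x) loc_one.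

End Localization.

(* Given an A-algebra B (structure map f) and a : A, B[1/a] is integral over
   A[1/a]: every element x of B[1/a] is a root of a monic polynomial
   X^n + c_{n-1} X^{n-1} + ... + c_0 whose coefficients c_i lie in A[1/a]
   (mapped into B[1/a] by (c, m) |-> (f c, m)). *)
Definition loc_integral (A B : comPzRingType) (f : {rmorphism A -> B}) (a : A)
  : Prop :=
  forall x : B * nat, exists (n : nat) (c : 'I_n -> A * nat),
    loc_eq (f a)
      (loc_add (f a) (loc_exp x n)
         (\big[(loc_add (f a))/(loc_zero B)]_(i < n)
             loc_mul (f (c i).1, (c i).2) (loc_exp x i)))
      (loc_zero B).

(* Integrality over [A[1/a]] gives every [x] in [B] a relation
   [a^e x^n + c_{n-1} x^{n-1} + ... + c_0 = 0] with [c_i] in [A]. Peel it off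
   from the constant term by induction on [n]: modulo [J], [c_0] is a multiple
   of [x], so it lies in [Jac J]; then [a c_0] lies in the Jacobson radical of
   the ideal [{d | a^k d \in J for some k}] of [A], and the Jacobson property of
   [A] yields [a^k c_0^m \in J]. Writing the relation as [c_0 + Q x], the
   induction hypothesis in [J + <Q>] gives [a^k' x^m' = j + t Q] with [j] in [J];
   as [a^k (Q x)^m = a^k (-c_0)^m] modulo [J], the product
   [x^m a^k (a^k' x^m')^m] lies in [J]. Finally [(a x)^(k+m) \in J]. *)

From mathcomp Require Import all_boot all_algebra.
From mathcomp Require Import ring.
Import GRing.Theory.
Set Implicit Arguments. Unset Strict Implicit. Unset Printing Implicit Defensive.
Local Open Scope ring_scope.

Section IdealArith.
Variables (R : comPzRingType) (J : R -> Prop).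
Hypothesis idJ : is_ideal J.

Lemma ideal0 : J 0. Proof. by case: idJ. Qed.

Lemma idealD x y : J x -> J y -> J (x + y).
Proof. by case: idJ => _ + _; apply. Qed.

Lemma idealMl r x : J x -> J (r * x).
Proof. by case: idJ => _ _; apply. Qed.

Lemma idealMr r x : J x -> J (x * r).
Proof. by rewrite mulrC; apply: idealMl. Qed.

Lemma ideal_sum n (F : 'I_n -> R) : (forall i, J (F i)) -> J (\sum_(i < n) F i).
Proof. by move=> JF; apply: big_ind => //; [apply: ideal0 | apply: idealD]. Qed.

Lemma ideal_subX x y n : J (x - y) -> J (x ^+ n - y ^+ n).
Proof. by move=> Jxy; rewrite subrXX; apply: idealMr. Qed.

Lemma ideal_congrX s x y n : J (x - y) -> J (s * y ^+ n) -> J (s * x ^+ n).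
Proof.
move=> Jxy Jsy; rewrite -[x ^+ n](subrK (y ^+ n)) mulrDr.
by apply: idealD => //; apply/idealMl/ideal_subX.
Qed.

Lemma ideal_reciprocal_root n (c r v : R) (d : 'I_n -> R) :
  J (1 - r * v) -> c * r ^+ n + \sum_(i < n) d i * r ^+ i = 0 ->
  J (c + \sum_(i < n) d i * v ^+ (n - i)).
Proof.
move=> Jrv root_r.
have Jrv_pow k : J (1 - (r * v) ^+ k) by rewrite -{1}(expr1n R k); apply: ideal_subX.
have rev_root :
    c * (r * v) ^+ n + \sum_(i < n) d i * v ^+ (n - i) * (r * v) ^+ i = 0.
  transitivity (v ^+ n * (c * r ^+ n + \sum_(i < n) d i * r ^+ i));
    last by rewrite root_r mulr0.
  rewrite mulrDr mulr_sumr exprMn; congr (_ + _); first ring.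
  apply: eq_bigr => i _.
  have -> : v ^+ n = v ^+ (n - i) * v ^+ i by rewrite -exprD subnK // ltnW.
  by rewrite exprMn; ring.
suff: J (c + \sum_(i < n) d i * v ^+ (n - i) -
         (c * (r * v) ^+ n + \sum_(i < n) d i * v ^+ (n - i) * (r * v) ^+ i)).
  by rewrite rev_root subr0.
rewrite opprD addrACA -sumrB.
apply: idealD; first by rewrite -{1}[c]mulr1 -mulrBr; apply/idealMl/Jrv_pow.
by apply: ideal_sum => i; rewrite -{1}[_ * v ^+ _]mulr1 -mulrBr; apply/idealMl/Jrv_pow.
Qed.

End IdealArith.

Section GeneratedIdeals.
Variable R : comPzRingType.
Implicit Types (U V J : R -> Prop) (x c : R).

Lemma gen_ideal_of U x : U x -> gen_ideal U x.
Proof.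
by exists 1%N, (fun=> 1), (fun=> x); rewrite big_ord1 mul1r.
Qed.

Lemma gen_ideal_sub U V x : (forall y, U y -> V y) -> gen_ideal U x -> gen_ideal V x.
Proof. by move=> UV [n [r [u [Uu ->]]]]; exists n, r, u; split=> // i; apply: UV. Qed.

Lemma gen_ideal_min J x : is_ideal J -> gen_ideal J x -> J x.
Proof.
by move=> idJ [n [r [u [Ju ->]]]]; apply: ideal_sum => // i; apply: idealMl.
Qed.

Lemma gen_ideal_is_ideal U : is_ideal (gen_ideal U).
Proof.
split.
- by exists 0%N, (fun=> 0), (fun=> 0); rewrite big_ord0; split=> // -[].
- move=> _ _ [m [r1 [u1 [Uu1 ->]]]] [n [r2 [u2 [Uu2 ->]]]].
  pose glue (h1 : 'I_m -> R) (h2 : 'I_n -> R) (i : 'I_(m + n)) :=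
    match split i with inl k => h1 k | inr k => h2 k end.
  exists (m + n)%N, (glue r1 r2), (glue u1 u2); split.
    by move=> i; rewrite /glue; case: split.
  rewrite big_split_ord /glue.
  congr (_ + _); apply: eq_bigr => i _.
    by rewrite (unsplitK (inl i)).
  by rewrite (unsplitK (inr i)).
- move=> s _ [n [r [u [Uu ->]]]].
  exists n, (fun i => s * r i), u; split=> //.
  by rewrite mulr_sumr; apply: eq_bigr => i _; rewrite mulrA.
Qed.

Lemma gen_ideal_U1P J (idJ : is_ideal J) c z :
  gen_ideal (fun y => J y \/ y = c) z <-> exists j w, J j /\ z = j + w * c.
Proof.
split; last first.
  have idG := gen_ideal_is_ideal (fun y => J y \/ y = c).
  move=> [j [w [Jj ->]]]; apply: (idealD idG); first by apply: gen_ideal_of; left.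
  by apply: (idealMl idG); apply: gen_ideal_of; right.
move=> [n [r [u [Uu ->]]]].
apply: (big_ind (fun z => exists j w, J j /\ z = j + w * c)).
- by exists 0, 0; rewrite mul0r addr0; split=> //; apply: ideal0.
- move=> _ _ [j1 [w1 [Jj1 ->]]] [j2 [w2 [Jj2 ->]]].
  by exists (j1 + j2), (w1 + w2); split; [apply: idealD | ring].
- move=> i _; case: (Uu i) => [Jui | ->].
    by exists (r i * u i), 0; rewrite mul0r addr0; split=> //; apply: idealMl.
  by exists 0, (r i); rewrite add0r; split=> //; apply: ideal0.
Qed.

Lemma JacradP J (idJ : is_ideal J) x :
  Jacrad J x <-> forall b, exists j w, J j /\ 1 = j + w * (1 - x * b).
Proof. by split=> Jx b; apply/(gen_ideal_U1P idJ); last apply: Jx. Qed.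

Lemma Jacrad_sub J J' x : (forall y, J y -> J' y) -> Jacrad J x -> Jacrad J' x.
Proof. by move=> JJ' Jx b; apply: gen_ideal_sub (Jx b) => y [/JJ'|]; [left | right]. Qed.

Lemma Jacrad_congr_mul J c q y : is_ideal J ->
  J (c + q * y) -> Jacrad J y -> Jacrad J c.
Proof.
move=> idJ Jcqy /(JacradP idJ) Jy; apply/JacradP => // b.
have [j [w [Jj Ej]]] := Jy (- (q * b)).
exists (j + w * b * (c + q * y)), w; split; first by apply: idealD => //; apply: idealMl.
by rewrite [LHS]Ej; ring.
Qed.

End GeneratedIdeals.

Lemma loc_exp_den0 (B : comPzRingType) (r : B) n : loc_exp (r, 0%N) n = (r ^+ n, 0%N).
Proof. by elim: n => [|n IHn] //=; rewrite IHn /loc_mul /= exprS. Qed.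

Lemma loc_sum_num (B : comPzRingType) (s : B) n (F : 'I_n -> B * nat) :
  exists (den : nat) (k : nat -> nat),
    \big[loc_add s/loc_zero B]_(i < n) F i = (\sum_(i < n) s ^+ k i * (F i).1, den).
Proof.
elim: n F => [|n IHn] F; first by exists 0%N, (fun=> 0%N); rewrite !big_ord0.
rewrite big_ord_recl; have [den [k ->]] := IHn (fun i => F (lift ord0 i)).
exists ((F ord0).2 + den)%N, (fun i => if i is i'.+1 then ((F ord0).2 + k i')%N else den).
rewrite big_ord_recl /loc_add /= mulr_sumr; congr (_ + _, _).
by apply: eq_bigr => i _; rewrite exprD mulrA.
Qed.

Lemma loc_integral_rel (A B : comPzRingType) (f : {rmorphism A -> B}) (a : A) :
  loc_integral f a -> forall r : B, exists n e (c : 'I_n -> A),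
    f a ^+ e * r ^+ n + \sum_(i < n) f (c i) * r ^+ i = 0.
Proof.
move=> intB r; have [n [c]] := intB (r, 0%N).
have [den [k ->]] := loc_sum_num (f a)
  (fun i => loc_mul (f (c i).1, (c i).2) (loc_exp (r, 0%N) i)).
rewrite loc_exp_den0 /loc_eq /loc_add /= expr0 !mul1r mulr0 subr0 => -[l Hl].
exists n, (l + den)%N, (fun i : 'I_n => a ^+ (l + k i) * (c i).1).
rewrite -[RHS]Hl mulrDr exprD -mulrA; congr (_ + _).
rewrite mulr_sumr; apply: eq_bigr => i _.
by rewrite loc_exp_den0 /= rmorphM rmorphXn exprD; ring.
Qed.

Section SaturatedPreimage.
Variables (A B : comPzRingType) (f : {rmorphism A -> B}) (s : B) (J : B -> Prop).
Hypothesis idJ : is_ideal J.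

Definition preim_sat : A -> Prop := fun d => exists k, J (s ^+ k * f d).

Lemma preim_sat_ideal : is_ideal preim_sat.
Proof.
split.
- by exists 0%N; rewrite rmorph0 mulr0; apply: ideal0.
- move=> x y [k Jx] [l Jy]; exists (k + l)%N.
  have -> : s ^+ (k + l) * f (x + y) = s ^+ l * (s ^+ k * f x) + s ^+ k * (s ^+ l * f y).
    by rewrite rmorphD exprD; ring.
  by apply: idealD => //; apply: idealMl.
- move=> r x [k Jx]; exists k.
  by rewrite rmorphM mulrCA; apply: idealMl.
Qed.

End SaturatedPreimage.

Section IntegralOverJacobson.
Variables (A B : comPzRingType) (f : {rmorphism A -> B}) (a : A).
Hypothesis intB : loc_integral f a.

(* Modulo [J], [f u] for [u := 1 - a g b] has an inverse [r], and [r] satisfies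
   [a^e r^n + c_{n-1} r^{n-1} + ... + c_0 = 0]; the reciprocal relation puts
   [a^e + u W] into the saturated preimage, and [(g b)^e] times it is [1]
   modulo [u]. *)
Lemma Jacrad_preim_sat J g : is_ideal J ->
  Jacrad J (f g) -> Jacrad (preim_sat f (f a) J) (a * g).
Proof.
move=> idJ /(JacradP idJ) Jg; apply/JacradP => [|b]; first exact: preim_sat_ideal.
set u := 1 - a * g * b.
have [j [r [Jj Er]]] := Jg (f (a * b)).
have Jru : J (1 - r * f u).
  suff -> : 1 - r * f u = j by [].
  by rewrite {1}Er /u rmorphB rmorph1 !rmorphM; ring.
have [n [e [c root_r]]] := loc_integral_rel intB r.
pose z := a ^+ e + \sum_(i < n) c i * u ^+ (n - i).
have Iz : preim_sat f (f a) J z.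
  exists 0%N; rewrite mul1r rmorphD rmorph_sum rmorphXn.
  under eq_bigr do rewrite rmorphM rmorphXn.
  exact: ideal_reciprocal_root Jru root_r.
have [W EW] : exists W, z = a ^+ e + u * W.
  exists (\sum_(i < n) c i * u ^+ (n - i.+1)); rewrite mulr_sumr; congr (_ + _).
  by apply: eq_bigr => i _; rewrite -(subnSK (ltn_ord i)) exprS; ring.
have [S ES] : exists S, 1 - (a * g * b) ^+ e = u * S.
  by eexists; rewrite -[in LHS](expr1n _ e) subrXX.
exists ((g * b) ^+ e * z), (S - W * (g * b) ^+ e); split.
  by case: Iz => k Jk; exists k; rewrite rmorphM mulrCA; apply: idealMl.
by rewrite -[LHS](subrK ((a * g * b) ^+ e)) ES EW !exprMn; ring.
Qed.

Hypothesis jacA : Jacobson_ring A.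

Lemma Jacrad_image_pow J g : is_ideal J ->
  Jacrad J (f g) -> exists k m, J (f a ^+ k * f g ^+ m).
Proof.
move=> idJ Jg; have idI := preim_sat_ideal f (f a) idJ.
have [m /(gen_ideal_min idI) [k Jk]] := jacA idI (Jacrad_preim_sat idJ Jg).
exists (k + m)%N, m; move: Jk; rewrite rmorphXn rmorphM exprMn exprD.
by congr J; ring.
Qed.

Lemma Jacrad_root_pow n : forall J y e (c : 'I_n -> A), is_ideal J ->
  Jacrad J y -> J (f a ^+ e * y ^+ n + \sum_(i < n) f (c i) * y ^+ i) ->
  exists k m, J (f a ^+ k * y ^+ m).
Proof.
elim: n => [|n IHn] J y e c idJ Jy JP.
  by exists e, 0%N; move: JP; rewrite big_ord0 !expr0 !addr0.
set P := _ + _ in JP.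
pose Q := f a ^+ e * y ^+ n + \sum_(i < n) f (c (lift ord0 i)) * y ^+ i.
have EP : P = f (c ord0) + Q * y.
  rewrite /P /Q big_ord_recl expr0 mulr1 mulrDl mulr_suml.
  under [X in _ = _ + (_ + X)]eq_bigr do rewrite -mulrA -exprSr.
  by rewrite exprSr; ring.
have [k [m Jc0]] : exists k m, J (f a ^+ k * f (c ord0) ^+ m).
  by apply: Jacrad_image_pow idJ (Jacrad_congr_mul (q := Q) idJ _ Jy); rewrite -EP.
pose J' := gen_ideal (fun z => J z \/ z = Q).
have [k' [m' /(gen_ideal_U1P idJ) [j [t [Jj Ejt]]]]] :
    exists k' m', J' (f a ^+ k' * y ^+ m').
  apply: (IHn J' y e (fun i => c (lift ord0 i))).
  - exact: gen_ideal_is_ideal.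
  - by apply: Jacrad_sub Jy => z Jz; apply: gen_ideal_of; left.
  - by apply: gen_ideal_of; right.
have JQy : J (f a ^+ k * (Q * y) ^+ m).
  apply: (ideal_congrX idJ (y := - f (c ord0))); first by rewrite opprK addrC -EP.
  by rewrite exprNn mulrCA; apply: idealMl.
exists (k + k' * m)%N, (m + m' * m)%N.
have -> : f a ^+ (k + k' * m) * y ^+ (m + m' * m) =
          y ^+ m * f a ^+ k * (f a ^+ k' * y ^+ m') ^+ m.
  by rewrite exprMn !exprD !exprM; ring.
apply: (ideal_congrX idJ (y := t * Q)); first by rewrite Ejt addrK.
have -> : y ^+ m * f a ^+ k * (t * Q) ^+ m = t ^+ m * (f a ^+ k * (Q * y) ^+ m).
  by rewrite !exprMn; ring.
exact: idealMl.
Qed.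

End IntegralOverJacobson.

Unset Implicit Arguments. Set Strict Implicit.

Theorem mainTheorem6 (A B : comPzRingType) (f : {rmorphism A -> B}) (a : A) :
  Jacobson_ring A ->
  loc_integral f a ->
  forall J : B -> Prop, is_ideal J ->
  forall x : B, Jacrad J x -> Nilrad J (f a * x).
Proof.
move=> jacA intB J idJ x Jx.
have [n [e [c root_x]]] := loc_integral_rel intB x.
have JP : J (f a ^+ e * x ^+ n + \sum_(i < n) f (c i) * x ^+ i).
  by rewrite root_x; apply: ideal0.
have [k [m Jkm]] := Jacrad_root_pow intB jacA idJ Jx JP.
exists (k + m)%N; apply: gen_ideal_of.
have -> : (f a * x) ^+ (k + m) = f a ^+ m * x ^+ k * (f a ^+ k * x ^+ m).
  by rewrite exprMn !exprD; ring.
exact: idealMl.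
Qed.
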